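(* If an $n$-agent network is $(k+1)$-redundant with $k\ge 0$, then it is $k$-redundant.
   Context: An $n$-agent network: agents $\mathcal V=\{1,\dots,n\}$, each agent $i$ having real matrices $A_i\in\mathbb R^{r_i\times d}$, $b_i\in\mathbb R^{r_i}$. The network is $k$-redundant ($k\in\{0,1,\dots,n-1\}$) if for any $\mathcal S_1,\mathcal S_2\subset\mathcal V$ with $|\mathcal S_1|=|\mathcal S_2|=n-k$, $\arg\min_x\sum_{i\in\mathcal S_1}\|A_ix-b_i\|_2^2=\arg\min_x\sum_{i\in\mathcal S_2}\|A_ix-b_i\|_2^2$ (so $(k+1)$-redundancy presupposes $k+1\le n-1$). *)

From HB Require Import structures.
From mathcomp Require Import all_boot all_order all_algebra.
From mathcomp Require Import reals.
Set Implicit Arguments. Unset Strict Implicit. Unset Printing Implicit Defensive.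
Import Order.TTheory GRing.Theory Num.Theory.
Local Open Scope ring_scope.

Definition sqnorm (R : realType) (m : nat) (v : 'cV[R]_m) : R :=
  \sum_(j < m) (v j 0) ^+ 2.

Definition cost (R : realType) (n d : nat) (r : 'I_n -> nat)
  (A : forall i : 'I_n, 'M[R]_(r i, d)) (b : forall i : 'I_n, 'cV[R]_(r i))
  (S : {set 'I_n}) (x : 'cV[R]_d) : R :=
  \sum_(i in S) sqnorm (A i *m x - b i).

Definition argmin (R : realType) (n d : nat) (r : 'I_n -> nat)
  (A : forall i : 'I_n, 'M[R]_(r i, d)) (b : forall i : 'I_n, 'cV[R]_(r i))
  (S : {set 'I_n}) : 'cV[R]_d -> Prop :=
  fun x => forall y : 'cV[R]_d, cost A b S x <= cost A b S y.

Definition k_redundant (R : realType) (n d : nat) (r : 'I_n -> nat)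
  (A : forall i : 'I_n, 'M[R]_(r i, d)) (b : forall i : 'I_n, 'cV[R]_(r i))
  (k : nat) : Prop :=
  (k < n)%N /\
  forall S1 S2 : {set 'I_n}, #|S1| = (n - k)%N -> #|S2| = (n - k)%N ->
    argmin A b S1 = argmin A b S2.

(* Let #|S| = n - k.  Summing the costs of the sets S :\ j, j in S, counts every
   agent of S exactly #|S| - 1 times, so this sum is a positive multiple of the
   cost of S.  By (k+1)-redundancy all the S :\ j share one argmin set, which is
   nonempty since a least-squares cost always has a minimizer (the normal
   equations are solvable).  A sum of functions sharing a nonempty argmin set has
   that same argmin set, hence argmin S = argmin (S :\ j) for every j in S, and
   any two sets of n - k agents have the same argmin. *)
From HB Require Import structures.
From mathcomp Require Import all_boot all_order all_algebra.
From mathcomp Require Import boolp reals.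
From mathcomp Require Import zify.
Set Implicit Arguments. Unset Strict Implicit. Unset Printing Implicit Defensive.
Import Order.TTheory GRing.Theory Num.Theory.
Local Open Scope ring_scope.

Section Minimizers.
Variables (R : numDomainType) (T : Type).

Definition minimizer (f : T -> R) : T -> Prop := fun x => forall y, f x <= f y.

Lemma minimizer_scale (c : R) (f : T -> R) :
  0 < c -> minimizer (fun x => c * f x) = minimizer f.
Proof.
move=> c_gt0; apply/predeqP => x.
split=> x_min y; last by rewrite (ler_pM2l c_gt0); exact: x_min.
by rewrite -(ler_pM2l c_gt0); exact: (x_min y).
Qed.

Lemma minimizer_sum (I : finType) (P : pred I) (F : I -> T -> R) (X : T -> Prop) :
  (exists j, P j) -> (exists x, X x) -> (forall j, P j -> minimizer (F j) = X) ->
  minimizer (fun x => \sum_(j | P j) F j x) = X.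
Proof.
move=> [j0 Pj0] [x0 Xx0] FX; apply/predeqP => x; split=> [x_min | Xx y]; last first.
  by apply: ler_sum => j Pj; move: Xx; rewrite -(FX j Pj); apply.
have x0_min j : P j -> minimizer (F j) x0 by move=> Pj; rewrite FX.
have x_le_x0 : F j0 x <= F j0 x0.
  rewrite -subr_le0; apply: le_trans (_ : \sum_(j | P j) (F j x - F j x0) <= 0).
    rewrite (bigD1 j0) //= lerDl; apply: sumr_ge0 => j /andP[Pj _].
    by rewrite subr_ge0; exact: x0_min.
  by rewrite sumrB subr_le0; exact: x_min.
by rewrite -(FX j0 Pj0) => y; apply: le_trans x_le_x0 (x0_min j0 Pj0 y).
Qed.

End Minimizers.

Section SquaredNorm.
Variable R : realType.

Lemma sqnormE m (v : 'cV[R]_m) : sqnorm v = (v^T *m v) 0 0.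
Proof. by rewrite /sqnorm mxE; apply: eq_bigr => j _; rewrite !mxE expr2. Qed.

Lemma sqnorm_ge0 m (v : 'cV[R]_m) : 0 <= sqnorm v.
Proof. by apply: sumr_ge0 => j _; exact: sqr_ge0. Qed.

Lemma sqnorm_eq0 m (v : 'cV[R]_m) : sqnorm v = 0 -> v = 0.
Proof.
move=> /eqP; rewrite /sqnorm psumr_eq0 => [/allP v0|j _]; last exact: sqr_ge0.
apply/matrixP => i j; rewrite ord1 mxE; apply/eqP; rewrite -sqrf_eq0.
exact: v0 (mem_index_enum _).
Qed.

Lemma sqnormD m (v w : 'cV[R]_m) :
  sqnorm (v + w) = sqnorm v + sqnorm w + 2 * (v^T *m w) 0 0.
Proof.
rewrite !sqnormE (raddfD (@trmx R m 1)) mulmxDl !mulmxDr !mxE.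
have -> : \sum_j w^T 0 j * v j 0 = \sum_j v^T 0 j * w j 0.
  by apply: eq_bigr => j _; rewrite !mxE mulrC.
by rewrite mulr_natl mulr2n !addrA -!addrA; congr (_ + _); rewrite [RHS]addrC -addrA.
Qed.

End SquaredNorm.

Section LeastSquares.
Variables (R : realType) (n d : nat) (r : 'I_n -> nat).
Variables (A : forall i : 'I_n, 'M[R]_(r i, d)) (b : forall i : 'I_n, 'cV[R]_(r i)).

Section NormalEquations.
Variable S : {set 'I_n}.

Definition gram : 'M[R]_d := \sum_(i in S) (A i)^T *m A i.
Definition normal_rhs : 'cV[R]_d := \sum_(i in S) (A i)^T *m b i.

Lemma gram_tr : gram^T = gram.
Proof. by rewrite raddf_sum; apply: eq_bigr => i _; rewrite /= trmx_mul trmxK. Qed.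

Lemma gram_ker (v : 'cV[R]_d) i : gram *m v = 0 -> i \in S -> A i *m v = 0.
Proof.
move=> gram_v iS.
have : \sum_(i in S) sqnorm (A i *m v) = 0.
  transitivity ((v^T *m gram *m v) 0 0); last by rewrite -mulmxA gram_v mulmx0 mxE.
  rewrite mulmx_sumr mulmx_suml summxE; apply: eq_bigr => j _.
  by rewrite sqnormE trmx_mul !mulmxA.
move/eqP; rewrite psumr_eq0 => [/allP Av0|j _]; last exact: sqnorm_ge0.
by apply: sqnorm_eq0; apply/eqP; have := Av0 i (mem_index_enum _); rewrite iS.
Qed.

(* The right-hand side lies in the column space of the Gram matrix because it is
   orthogonal to the kernel of this symmetric matrix. *)
Lemma normal_eq_solvable : exists x, gram *m x = normal_rhs.
Proof.
have rhs_in : (normal_rhs^T <= gram)%MS.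
  rewrite submxE; apply/eqP/matrixP => i j; rewrite ord1 [RHS]mxE.
  have gram_col : gram *m col j (cokermx gram) = 0.
    by rewrite colE mulmxA mulmx_coker mul0mx.
  have -> : (normal_rhs^T *m cokermx gram) 0 j
           = (normal_rhs^T *m col j (cokermx gram)) 0 0.
    by rewrite !mxE; apply: eq_bigr => l _; rewrite !mxE.
  rewrite raddf_sum mulmx_suml summxE big1 // => l lS.
  by rewrite /= trmx_mul trmxK -mulmxA gram_ker // mulmx0 mxE.
have [D rhsD] := submxP rhs_in.
by exists D^T; rewrite -[normal_rhs]trmxK rhsD trmx_mul gram_tr.
Qed.

(* Expanding the cost at y = x + u, the cross term is 2 u^T (gram x - normal_rhs). *)
Lemma normal_eq_argmin (x : 'cV[R]_d) : gram *m x = normal_rhs -> argmin A b S x.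
Proof.
move=> normal_x y; set u := y - x.
have -> : cost A b S y = \sum_(i in S) (sqnorm (A i *m u) + sqnorm (A i *m x - b i)
    + 2 * (u^T *m ((A i)^T *m (A i *m x - b i))) 0 0).
  rewrite /cost; apply: eq_bigr => i _; rewrite mulmxA -trmx_mul -sqnormD.
  by rewrite /u mulmxBr addrA subrK.
rewrite !big_split /= -mulr_sumr -summxE -mulmx_sumr.
have -> : \sum_(i in S) (A i)^T *m (A i *m x - b i) = gram *m x - normal_rhs.
  by rewrite mulmx_suml -sumrB; apply: eq_bigr => i _; rewrite mulmxBr mulmxA.
rewrite normal_x subrr mulmx0 mxE mulr0 addr0 addrC lerDl.
by apply: sumr_ge0 => i _; exact: sqnorm_ge0.
Qed.

Lemma exists_argmin : exists x, argmin A b S x.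
Proof.
by have [x normal_x] := normal_eq_solvable; exists x; exact: normal_eq_argmin.
Qed.

End NormalEquations.

Variable S : {set 'I_n}.

Lemma cost_sum_setD1 x :
  \sum_(j in S) cost A b (S :\ j) x = (#|S|.-1)%:R * cost A b S x.
Proof.
have costD1 j :
    j \in S -> cost A b (S :\ j) x = cost A b S x - sqnorm (A j *m x - b j).
  move=> jS; rewrite /cost (bigD1 j jS) /= addrC addrK.
  by apply: eq_bigl => i; rewrite in_setD1 andbC.
rewrite (eq_bigr _ costD1) sumrB sumr_const -/(cost A b S x) mulr_natl.
have [S0 | S_gt0] := posnP #|S|.
  by rewrite S0 /cost (cards0_eq S0) big_set0 mul0rn subr0.
by rewrite -{1}(prednK S_gt0) mulrSr addrK.
Qed.

Lemma argmin_setD1 j0 : (1 < #|S|)%N -> j0 \in S ->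
  (forall j, j \in S -> argmin A b (S :\ j) = argmin A b (S :\ j0)) ->
  argmin A b S = argmin A b (S :\ j0).
Proof.
move=> S_gt1 j0S same_argmin.
have c_gt0 : 0 < (#|S|.-1)%:R :> R by rewrite ltr0n; lia.
rewrite -[argmin A b S]/(minimizer (cost A b S)) -(minimizer_scale _ c_gt0).
rewrite -(funext cost_sum_setD1); apply: minimizer_sum => //; first by exists j0.
exact: exists_argmin.
Qed.

End LeastSquares.

Theorem corollary2 (R : realType) (n d : nat) (r : 'I_n -> nat)
  (A : forall i : 'I_n, 'M[R]_(r i, d)) (b : forall i : 'I_n, 'cV[R]_(r i))
  (k : nat) :
  k_redundant A b k.+1 -> k_redundant A b k.
Proof.
case=> k1_lt_n redundant; split; first exact: ltnW.
have cardD1_eq (S : {set 'I_n}) j :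
    #|S| = (n - k)%N -> j \in S -> #|S :\ j| = (n - k.+1)%N.
  by move=> cardS jS; have := cardsD1 j S; rewrite jS cardS; lia.
have argmin_drop (S : {set 'I_n}) j :
    #|S| = (n - k)%N -> j \in S -> argmin A b S = argmin A b (S :\ j).
  move=> cardS jS; apply: argmin_setD1 => //; first by rewrite cardS; lia.
  by move=> i iS; apply: redundant; exact: cardD1_eq.
have exists_mem (S : {set 'I_n}) : #|S| = (n - k)%N -> exists j, j \in S.
  by move=> cardS; apply/set0Pn; rewrite -card_gt0 cardS; lia.
move=> S1 S2 card1 card2.
have [[j1 j1S1] [j2 j2S2]] := (exists_mem S1 card1, exists_mem S2 card2).
rewrite (argmin_drop S1 j1) // (argmin_drop S2 j2) //.
by apply: redundant; exact: cardD1_eq.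
Qed.
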